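(* For $\hat{\Sigma}$ and $\bar{\Sigma}$, we have $\rho(\hat{\boldsymbol{\mathcal{A}}}) = \rho(\bar{\boldsymbol{\mathcal{A}}})$ and $\xi(\hat{\mathbf{A}}_{1:r}) = \xi(\bar{\mathbf{A}}_{1:s})$.
   Context: $\Sigma$ is the MJS $\mathbf{x}_{t+1}=\mathbf{A}_{\omega_t}\mathbf{x}_t+\mathbf{B}_{\omega_t}\mathbf{u}_t$ with $s$ modes and Markov transition matrix $\mathbf{T}$. Given a partition $\hat{\Omega}_{1:r}$ of $[s]$, the reduced MJS $\hat{\Sigma}$ has $r$ modes with $\hat{\mathbf{A}}_k=\frac{1}{|\hat{\Omega}_k|}\sum_{i\in\hat{\Omega}_k}\mathbf{A}_i$, $\hat{\mathbf{B}}_k=\frac{1}{|\hat{\Omega}_k|}\sum_{i\in\hat{\Omega}_k}\mathbf{B}_i$, $\hat{\mathbf{T}}(k,l)=\frac{1}{|\hat{\Omega}_k|}\sum_{i\in\hat{\Omega}_k,j\in\hat{\Omega}_l}\mathbf{T}(i,j)$. The expanded MJS $\bar{\Sigma}$ has $s$ modes with $\bar{\mathbf{A}}_i=\hat{\mathbf{A}}_k$, $\bar{\mathbf{B}}_i=\hat{\mathbf{B}}_k$ for $i\in\hat{\Omega}_k$, and a Markov matrix $\bar{\mathbf{T}}$ satisfying $\sum_{j\in\hat{\Omega}_l}\bar{\mathbf{T}}(i,j)=\hat{\mathbf{T}}(k,l)$ for all $k,l$ and $i\in\hat{\Omega}_k$ (and $\|\bar{\mathbf{T}}-\mathbf{T}\|_\infty,\|\bar{\mathbf{T}}-\mathbf{T}\|_F\le\epsilon_{\mathbf{T}}$).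 The augmented state matrix $\hat{\boldsymbol{\mathcal{A}}}\in\mathbb{R}^{rn^2\times rn^2}$ has $ij$-th $n^2\times n^2$ block $\hat{\mathbf{T}}(j,i)\,\hat{\mathbf{A}}_j\otimes\hat{\mathbf{A}}_j$, and $\bar{\boldsymbol{\mathcal{A}}}\in\mathbb{R}^{sn^2\times sn^2}$ has $ij$-th block $\bar{\mathbf{T}}(j,i)\,\bar{\mathbf{A}}_j\otimes\bar{\mathbf{A}}_j$; $\rho(\cdot)$ is the spectral radius and $\xi(\cdot)$ the joint spectral radius $\xi(\mathbf{M}_{1:m})=\lim_{k\to\infty}\max_{\sigma_{1:k}}\|\mathbf{M}_{\sigma_1}\cdots\mathbf{M}_{\sigma_k}\|^{1/k}$. *)

From HB Require Import structures.
From mathcomp Require Import all_boot all_order all_algebra.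
From mathcomp Require Import all_classical all_reals all_analysis.
From mathcomp Require Import complex mxtens.
Set Implicit Arguments. Unset Strict Implicit. Unset Printing Implicit Defensive.
Import Order.TTheory GRing.Theory Num.Theory.
Import numFieldNormedType.Exports.
Local Open Scope ring_scope.
Local Open Scope classical_set_scope.

Section Defs.
Variable R : realType.

Definition stochastic_mx (s : nat) (T : 'M[R]_s) : Prop :=
  (forall i j, 0 <= T i j) /\ (forall i, \sum_(j < s) T i j = 1).

Definition cmod (z : R[i]) : R := Num.sqrt (complex.Re z ^+ 2 + complex.Im z ^+ 2).

Definition specrad (k : nat) (M : 'M[R]_k) : R :=
  sup [set cmod l | l in
        [set l : R[i] | eigenvalue (map_mx (fun x : R => (x%:C)%C) M) l]].

Definition mxprod (m n : nat) (M : 'I_m -> 'M[R]_n) (sg : seq 'I_m) : 'M[R]_n :=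
  foldr (fun i P => M i *m P) 1%:M sg.

(* joint spectral radius, computed with the max-entry matrix norm (the limit
   is independent of the chosen norm); index k.+1 = length of the products. *)
Definition jsr (m n : nat) (M : 'I_m -> 'M[R]_n) : R :=
  limn (fun k : nat =>
    (\big[Order.max/0]_(sg : {ffun 'I_k.+1 -> 'I_m})
        `| mxprod M [seq sg i | i <- enum 'I_k.+1] |) `^ (k.+1%:R^-1)).

(* reduced system built from a partition encoded by a labelling f : [s] -> [r];
   block k is Omega_k = [set i | f i == k]. *)
Definition redA (s r n : nat) (A : 'I_s -> 'M[R]_n) (f : 'I_s -> 'I_r)
  (k : 'I_r) : 'M[R]_n :=
  (#|[set i | f i == k]|%:R)^-1 *: \sum_(i | f i == k) A i.

Definition redT (s r : nat) (T : 'M[R]_s) (f : 'I_s -> 'I_r) : 'M[R]_r :=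
  \matrix_(k, l) ((#|[set i | f i == k]|%:R)^-1 *
                  \sum_(i | f i == k) \sum_(j | f j == l) T i j).

Definition augA (m n : nat) (T : 'M[R]_m) (A : 'I_m -> 'M[R]_n) :
  'M[R]_(\sum_(i < m) (n * n)) :=
  @mxblock R m m (fun _ => (n * n)%N) (fun _ => (n * n)%N)
    (fun i j => T j i *: (A j *t A j)).

End Defs.

(* Write Â and Ā for the augmented matrices of the reduced and of the expanded
   system, and S for the block matrix adding up the blocks of each class of the
   partition. The lumping condition on T̄ gives Â S = S Ā, so a left eigenvector
   v of Â yields the left eigenvector v S of Ā (S has a right inverse because
   the labelling is onto): ρ(Â) <= ρ(Ā). Conversely, as T̄ is nonnegative, every
   block of Ā^k is a nonnegative combination of Kronecker squares B ⊗ B, whose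
   entries are dominated by a linear functional that is nonnegative on such
   combinations. Summing the blocks of a class gives a block of Â^k, so the
   entries of Ā^k are bounded by those of Â^k, which grow no faster than
   (ρ(Â) + ε)^k; hence no eigenvalue of Ā exceeds ρ(Â) in modulus. The joint
   spectral radii agree because both families of mode matrices generate the
   same products. *)

From HB Require Import structures.
From mathcomp Require Import all_boot all_order all_algebra.
From mathcomp Require Import all_classical all_reals all_analysis.
From mathcomp Require Import complex mxtens.
From mathcomp Require Import ring lra.
Import Order.TTheory GRing.Theory Num.Theory.
Local Open Scope ring_scope.

Set Implicit Arguments. Unset Strict Implicit. Unset Printing Implicit Defensive.

Lemma ler_sum_term (R : numDomainType) (I : finType) (P : pred I) (F : I -> R) j :
  P j -> (forall i, P i -> 0 <= F i) -> F j <= \sum_(i | P i) F i.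
Proof.
move=> Pj F_ge0; rewrite (bigD1 j) //= lerDl.
by apply: sumr_ge0 => i /andP[Pi _]; exact: F_ge0.
Qed.

Lemma ler_sum2_term (R : numDomainType) (I J : finType) (F : I -> J -> R) i j :
  (forall i j, 0 <= F i j) -> F i j <= \sum_i \sum_j F i j.
Proof.
move=> F_ge0; apply: (le_trans (@ler_sum_term _ _ predT (F i) j _ _)) => //.
apply: (@ler_sum_term _ _ predT (fun i' => \sum_j F i' j)) => // i' _.
exact: sumr_ge0.
Qed.

Lemma geometric_recursion_bound (R : numFieldType) (a : nat -> R) (rho eps S K : R) :
  0 <= rho -> 0 < eps -> 0 <= S -> 0 <= K -> a 0%N <= S ->
  (forall k, a k.+1 <= K * (rho + eps) ^+ k + rho * a k) ->
  forall k, a k <= (S + K / eps) * (rho + eps) ^+ k.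
Proof.
move=> rho_ge0 eps_gt0 S_ge0 K_ge0 a0 a_rec; elim=> [|k IHk].
  by rewrite expr0 mulr1 (le_trans a0) // lerDl divr_ge0 // ltW.
apply: le_trans (a_rec k) _.
have c_ge0 : 0 <= (rho + eps) ^+ k by rewrite exprn_ge0 // addr_ge0 // ltW.
have -> : (S + K / eps) * (rho + eps) ^+ k.+1 =
    (eps * S + K) * (rho + eps) ^+ k + rho * ((S + K / eps) * (rho + eps) ^+ k).
  by rewrite exprS; field; rewrite gt_eqF.
by rewrite lerD ?ler_wpM2l // ler_wpM2r // lerDr mulr_ge0 // ltW.
Qed.

Lemma bernoulli_le (R : realDomainType) (q : R) k : 0 <= q -> 1 + k%:R * q <= (1 + q) ^+ k.
Proof.
move=> q_ge0; elim: k => [|k IHk]; first by rewrite mul0r addr0 expr0.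
rewrite exprS (le_trans _ (ler_wpM2l _ IHk)) ?addr_ge0 //.
have kqq_ge0 : 0 <= k%:R * q * q by rewrite !mulr_ge0.
rewrite -natr1; nra.
Qed.

Lemma ler_of_expn_bound (R : archiRealFieldType) (c C x y : R) :
  0 < c -> 0 < y -> (forall k, c * x ^+ k <= C * y ^+ k) -> x <= y.
Proof.
move=> c_gt0 y_gt0 xy_bound; rewrite leNgt; apply/negP => y_lt_x.
set q := x / y - 1.
have q_gt0 : 0 < q by rewrite subr_gt0 ltr_pdivlMr // mul1r.
have x_eq : x = (1 + q) * y by rewrite /q addrC subrK mulfVK ?gt_eqF.
have lin_bound k : c * (1 + k%:R * q) <= C.
  have yk_gt0 : 0 < y ^+ k by rewrite exprn_gt0.
  rewrite -(ler_pM2r yk_gt0) (le_trans _ (xy_bound k)) // x_eq exprMn mulrA.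
  by rewrite ler_pM2r // ler_pM2l // bernoulli_le // ltW.
have C_ge0 : 0 <= C by rewrite (le_trans _ (lin_bound 0%N)) // mul0r addr0 mulr1 ltW.
have cq_gt0 : 0 < c * q by rewrite mulr_gt0.
have := lin_bound (Num.Def.archi_bound (C / (c * q))).
have := archi_boundP (divr_ge0 C_ge0 (ltW cq_gt0)).
rewrite ltr_pdivrMr //; nra.
Qed.

Section ComplexModulus.
Variable R : realType.
Local Open Scope complex_scope.

Lemma cmodE (z : R[i]) : `|z| = (cmod z)%:C.
Proof. by rewrite normc_def. Qed.

Lemma cmod_ge0 (z : R[i]) : 0 <= cmod z.
Proof. exact: sqrtr_ge0. Qed.

Lemma cmod_gt0 (z : R[i]) : z != 0 -> 0 < cmod z.
Proof. by rewrite -normr_gt0 cmodE ltcR. Qed.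

Lemma cmodD (x y : R[i]) : cmod (x + y) <= cmod x + cmod y.
Proof. by rewrite -lecR rmorphD /= -!cmodE ler_normD. Qed.

Lemma cmodM (x y : R[i]) : cmod (x * y) = cmod x * cmod y.
Proof. by apply: (@complexI R); rewrite rmorphM /= -!cmodE normrM. Qed.

Lemma cmodX (x : R[i]) k : cmod (x ^+ k) = cmod x ^+ k.
Proof. by apply: (@complexI R); rewrite rmorphXn /= -!cmodE normrX. Qed.

Lemma cmodR (x : R) : cmod x%:C = `|x|.
Proof. by rewrite /cmod /= expr0n /= addr0 sqrtr_sqr. Qed.

Lemma cmod_sum (I : Type) (l : seq I) (P : pred I) (F : I -> R[i]) :
  cmod (\sum_(i <- l | P i) F i) <= \sum_(i <- l | P i) cmod (F i).
Proof.
rewrite -lecR -cmodE (le_trans (ler_norm_sum _ _ _)) // rmorph_sum.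
by apply: ler_sum => i _; rewrite cmodE.
Qed.

End ComplexModulus.

Lemma map_mxX (R S : pzRingType) (g : {rmorphism R -> S}) m (M : 'M[R]_m) k :
  map_mx g (M ^+ k) = map_mx g M ^+ k.
Proof.
elim: k => [|k IHk]; first by rewrite !expr0 map_mx1.
by rewrite !exprS -!mulmxE map_mxM IHk.
Qed.

Definition cmx (R : realType) m n (M : 'M[R]_(m, n)) : 'M[R[i]]_(m, n) :=
  map_mx (fun x : R => (x%:C)%C) M.

Section Growth.
Variable R : realType.

Lemma horner_prod_growth m p (M : 'M[R[i]]_m.+1) (rho eps : R) (zs : seq R[i])
    (Y : 'M[R[i]]_(p, m.+1)) :
  0 <= rho -> 0 < eps -> {in zs, forall z, cmod z <= rho} ->
  Y *m horner_mx M (\prod_(z <- zs) ('X - z%:P)) = 0 ->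
  exists2 K, 0 <= K & forall k i j, cmod ((Y *m M ^+ k) i j) <= K * (rho + eps) ^+ k.
Proof.
move=> rho_ge0 eps_gt0; elim: zs Y => [|z zs IHzs] Y zs_le.
  rewrite big_nil rmorph1 mulmx1 => ->.
  by exists 0 => // k i j; rewrite mul0mx mxE cmodR normr0 mul0r.
rewrite big_cons rmorphM rmorphB /= horner_mx_X horner_mx_C -mulmxE mulmxA.
move=> /IHzs[z' zs'|K K_ge0 growZ]; first by apply: zs_le; rewrite inE zs' orbT.
have z_le : cmod z <= rho by apply: zs_le; rewrite inE eqxx.
set S := \sum_i \sum_j cmod (Y i j).
have S_ge0 : 0 <= S by do 2![apply: sumr_ge0 => ? _]; exact: cmod_ge0.
exists (S + K / eps) => [|k i j]; first by rewrite addr_ge0 ?divr_ge0 // ltW.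
apply: (@geometric_recursion_bound _ (fun k => cmod ((Y *m M ^+ k) i j))) => //.
  rewrite expr0 mulmx1; apply: (@ler_sum2_term _ _ _ (fun i j => cmod (Y i j))).
  by move=> *; exact: cmod_ge0.
move=> {}k; have -> : Y *m M ^+ k.+1 = Y *m (M - z%:M) *m M ^+ k + z *: (Y *m M ^+ k).
  by rewrite exprS -mulmxE mulmxA mulmxBr mulmxBl mul_mx_scalar -scalemxAl subrK.
rewrite [X in cmod X]mxE [X in cmod (_ + X)]mxE (le_trans (cmodD _ _)) // cmodM.
by rewrite lerD ?growZ // ler_wpM2r ?cmod_ge0.
Qed.

Lemma mxpow_growth m (M : 'M[R]_m) (rho eps : R) : 0 <= rho -> 0 < eps ->
  (forall l, eigenvalue (cmx M) l -> cmod l <= rho) ->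
  exists K, forall k i j, `|(M ^+ k) i j| <= K * (rho + eps) ^+ k.
Proof.
case: m M => [|m] M rho_ge0 eps_gt0 eig_le; first by exists 0 => k [].
have [zs charM] := closed_field_poly_normal (char_poly (cmx M)).
rewrite (monicP (char_poly_monic _)) scale1r in charM.
have zs_le : {in zs, forall z, cmod z <= rho}.
  by move=> z z_zs; apply: eig_le; rewrite eigenvalue_root_char charM root_prod_XsubC.
have [|K _ growM] := @horner_prod_growth m m.+1 (cmx M) _ _ _ 1%:M rho_ge0 eps_gt0 zs_le.
  by rewrite mul1mx -charM Cayley_Hamilton.
by exists K => k i j; have := growM k i j; rewrite mul1mx /cmx -map_mxX mxE cmodR.
Qed.

Lemma eigenvalue_le_of_mxpow_growth m (M : 'M[R]_m) (K c : R) mu : 0 < c ->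
  (forall k i j, `|(M ^+ k) i j| <= K * c ^+ k) ->
  eigenvalue (cmx M) mu -> cmod mu <= c.
Proof.
move=> c_gt0 growM /eigenvalueP[w w_eig w_neq0].
have [p w_p] : exists p, w 0 p != 0.
  case: (pickP (fun p => w 0 p != 0)) => [p w_p|w0]; first by exists p.
  by case/eqP: w_neq0; apply/rowP => p; rewrite mxE; apply/eqP/negbFE/w0.
have w_pow k : w *m cmx M ^+ k = mu ^+ k *: w.
  elim: k => [|k IHk]; first by rewrite !expr0 mulmx1 scale1r.
  by rewrite exprSr -mulmxE mulmxA IHk -scalemxAl w_eig scalerA -exprSr.
apply: (@ler_of_expn_bound _ (cmod (w 0 p)) ((\sum_q cmod (w 0 q)) * K)) => // [|k].
  exact: cmod_gt0.
have -> : cmod (w 0 p) * cmod mu ^+ k = cmod ((w *m cmx M ^+ k) 0 p).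
  by rewrite w_pow mxE cmodM cmodX mulrC.
rewrite /cmx -map_mxX mxE (le_trans (cmod_sum _ _ _)) // -mulrA mulr_suml.
by apply: ler_sum => q _; rewrite mxE cmodM cmodR ler_wpM2l ?cmod_ge0.
Qed.

End Growth.

Section KroneckerSquares.
Variables (R : realDomainType) (n : nat).
Local Notation N := (n * n)%N.

Definition tens_sq_cone (X : 'M[R]_N) := exists2 l : seq (R * 'M[R]_n),
  all (fun t => 0 <= t.1) l & X = \sum_(t <- l) t.1 *: (t.2 *t t.2).

Lemma tens_sq_cone0 : tens_sq_cone 0.
Proof. by exists [::]; rewrite ?big_nil. Qed.

Lemma tens_sq_coneD X Y : tens_sq_cone X -> tens_sq_cone Y -> tens_sq_cone (X + Y).
Proof.
move=> [l1 l1_ge0 ->] [l2 l2_ge0 ->]; exists (l1 ++ l2).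
  by rewrite all_cat l1_ge0.
by rewrite big_cat.
Qed.

Lemma tens_sq_coneZ c X : 0 <= c -> tens_sq_cone X -> tens_sq_cone (c *: X).
Proof.
move=> c_ge0 [l l_ge0 ->]; exists [seq (c * t.1, t.2) | t <- l].
  by rewrite all_map; apply/allP => t /(allP l_ge0) /= t_ge0; rewrite mulr_ge0.
by rewrite big_map scaler_sumr; apply: eq_bigr => t _; rewrite scalerA.
Qed.

Lemma tens_sq_cone_sum (I : finType) (P : pred I) (F : I -> 'M[R]_N) :
  (forall i, P i -> tens_sq_cone (F i)) -> tens_sq_cone (\sum_(i | P i) F i).
Proof.
by move=> F_cone; apply: big_ind => //; [exact: tens_sq_cone0|exact: tens_sq_coneD].
Qed.

Lemma tens_sq_coneMr X (B : 'M[R]_n) :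
  tens_sq_cone X -> tens_sq_cone (X *m (B *t B)).
Proof.
move=> [l l_ge0 ->]; exists [seq (t.1, t.2 *m B) | t <- l]; first by rewrite all_map.
by rewrite big_map mulmx_suml; apply: eq_bigr => t _; rewrite -scalemxAl tensmx_mul.
Qed.

Lemma tensmx11 : (1%:M : 'M[R]_n) *t (1%:M : 'M[R]_n) = 1%:M.
Proof.
apply/matrixP => i j; case: (mxtens_indexP i) => i1 i2; case: (mxtens_indexP j) => j1 j2.
rewrite tensmxE !mxE (inj_eq (can_inj (@mxtens_indexK _ _))) xpair_eqE.
by case: (i1 == j1); case: (i2 == j2); rewrite ?mulr1 ?mulr0.
Qed.

Lemma tens_sq_cone1 : tens_sq_cone 1%:M.
Proof. by exists [:: (1, 1%:M)]; rewrite /= ?ler01 // big_seq1 scale1r tensmx11. Qed.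

(* The quadratic form of [X] at the vectorised identity matrix. *)
Definition vec1_form (X : 'M[R]_N) : R :=
  \sum_(a < n) \sum_(b < n) X (mxtens_index (a, a)) (mxtens_index (b, b)).

Lemma vec1_form_sum (I : Type) (l : seq I) (P : pred I) (F : I -> 'M[R]_N) :
  vec1_form (\sum_(i <- l | P i) F i) = \sum_(i <- l | P i) vec1_form (F i).
Proof.
rewrite /vec1_form [RHS]exchange_big; apply: eq_bigr => a _.
by rewrite [RHS]exchange_big; apply: eq_bigr => b _; rewrite summxE.
Qed.

Lemma vec1_formZ c X : vec1_form (c *: X) = c * vec1_form X.
Proof.
rewrite /vec1_form mulr_sumr; apply: eq_bigr => a _.
by rewrite mulr_sumr; apply: eq_bigr => b _; rewrite mxE.
Qed.

Lemma vec1_form_tens (B : 'M[R]_n) :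
  vec1_form (B *t B) = \sum_(a < n) \sum_(b < n) B a b ^+ 2.
Proof. by apply: eq_bigr => a _; apply: eq_bigr => b _; rewrite tensmxE expr2. Qed.

Lemma vec1_form_tens_ge0 (B : 'M[R]_n) : 0 <= vec1_form (B *t B).
Proof. by rewrite vec1_form_tens; do 2![apply: sumr_ge0 => ? _]; exact: sqr_ge0. Qed.

Lemma normrM_le_sqr (x y S : R) : x ^+ 2 <= S -> y ^+ 2 <= S -> `|x * y| <= S.
Proof.
move=> xS yS; rewrite normrM; have [xy|yx] := leP `|x| `|y|.
  by rewrite (le_trans (ler_wpM2r (normr_ge0 _) xy)) // -expr2 real_normK ?num_real.
by rewrite (le_trans (ler_wpM2l (normr_ge0 _) (ltW yx))) // -expr2 real_normK ?num_real.
Qed.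

Lemma normr_tens_le (B : 'M[R]_n) p q : `|(B *t B) p q| <= vec1_form (B *t B).
Proof.
have sq_le i j : B i j ^+ 2 <= vec1_form (B *t B).
  rewrite vec1_form_tens; apply: (@ler_sum2_term _ _ _ (fun i j => B i j ^+ 2)).
  by move=> *; exact: sqr_ge0.
case: (mxtens_indexP p) => a b; case: (mxtens_indexP q) => a' b'.
by rewrite tensmxE normrM_le_sqr.
Qed.

Lemma tens_sq_cone_form_ge0 X : tens_sq_cone X -> 0 <= vec1_form X.
Proof.
move=> [l l_ge0 ->]; rewrite vec1_form_sum big_seq sumr_ge0 // => t /(allP l_ge0) t_ge0.
by rewrite vec1_formZ mulr_ge0 ?vec1_form_tens_ge0.
Qed.

Lemma tens_sq_cone_entry_le X p q : tens_sq_cone X -> `|X p q| <= vec1_form X.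
Proof.
move=> [l l_ge0 ->]; rewrite summxE vec1_form_sum (le_trans (ler_norm_sum _ _ _)) //.
rewrite !big_seq ler_sum // => t /(allP l_ge0) t_ge0.
by rewrite mxE vec1_formZ normrM ger0_norm // ler_wpM2l // normr_tens_le.
Qed.

End KroneckerSquares.

Lemma intertwine_pow (R : pzRingType) m n (A : 'M[R]_m) (B : 'M[R]_n) (S : 'M[R]_(m, n)) :
  A *m S = S *m B -> forall k, A ^+ k *m S = S *m B ^+ k.
Proof.
move=> AS; elim=> [|k IHk]; first by rewrite !expr0 mul1mx mulmx1.
by rewrite !exprS -!mulmxE -mulmxA IHk mulmxA AS mulmxA.
Qed.

Section BlockMatrices.
Variables (R : realType) (n : nat).
Local Notation N := (n * n)%N.
Local Notation blk X i j := (@submxblock R _ _ (fun=> N) (fun=> N) X i j).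

Lemma mxblock_entry m (X : 'M[R]_(\sum_(i < m) N)) p q :
  X p q = blk X (tagnat.sig1 p) (tagnat.sig1 q) (tagnat.sig2 p) (tagnat.sig2 q).
Proof. by rewrite /submxblock /mxsub mxE !tagnat.sig2K. Qed.

Lemma augA_pow_block_cone m (T : 'M[R]_m) (A : 'I_m -> 'M[R]_n) :
  (forall i j, 0 <= T i j) -> forall k i j, tens_sq_cone (blk (augA T A ^+ k) i j).
Proof.
move=> T_ge0; elim=> [|k IHk] i j.
  have -> : augA T A ^+ 0 = \mxdiag_(i < m) (1%:M : 'M[R]_N) by rewrite mxdiagZ.
  rewrite /mxdiag mxblockK.
  case: eqVneq => _; last exact: tens_sq_cone0.
  by rewrite conform_mx_id; exact: tens_sq_cone1.
rewrite exprSr -mulmxE -[augA T A ^+ k]submxblockK /augA mul_mxblock mxblockK.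
apply: tens_sq_cone_sum => l _; rewrite -scalemxAr.
by apply: tens_sq_coneZ => //; apply: tens_sq_coneMr; exact: IHk.
Qed.

Definition lump_mx s r (f : 'I_s -> 'I_r) : 'M[R]_(\sum_(l < r) N, \sum_(i < s) N) :=
  mxblock (fun (l : 'I_r) (i : 'I_s) => ((f i == l)%:R *: 1%:M : 'M[R]_N)).

Lemma lump_mxM s r t (f : 'I_s -> 'I_r) (g : 'I_t -> 'I_s) :
  lump_mx f *m lump_mx g = lump_mx (fun i => f (g i)).
Proof.
rewrite /lump_mx mul_mxblock; apply: eq_mxblock => l i.
rewrite (bigD1 (g i)) //= eqxx scale1r mulmx1 big1 ?addr0 // => j /negbTE gij.
by rewrite (eq_sym (g i)) gij scale0r mulmx0.
Qed.

Lemma lump_mx_id r : lump_mx (@id 'I_r) = 1%:M.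
Proof.
rewrite -(@mxdiagZ _ _ (fun=> N)) /mxdiag /lump_mx; apply: eq_mxblock => l l'.
by case: eqVneq => _; rewrite ?scale1r ?conform_mx_id ?scale0r.
Qed.

Lemma block_mul_lump_mx s r (X : 'M[R]_(\sum_(l < r) N)) (f : 'I_s -> 'I_r) l j :
  blk (X *m lump_mx f) l j = blk X l (f j).
Proof.
rewrite -{1}[X]submxblockK /lump_mx mul_mxblock !mxblockK.
rewrite (bigD1 (f j)) //= eqxx scale1r mulmx1 big1 ?addr0 // => l' /negbTE fjl'.
by rewrite eq_sym fjl' scale0r mulmx0.
Qed.

Lemma block_lump_mx_mul s r (Y : 'M[R]_(\sum_(i < s) N)) (f : 'I_s -> 'I_r) l j :
  blk (lump_mx f *m Y) l j = \sum_(i | f i == l) blk Y i j.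
Proof.
rewrite -{1}[Y]submxblockK /lump_mx mul_mxblock !mxblockK [RHS]big_mkcond /=.
by apply: eq_bigr => i _; case: (f i == l); rewrite ?scale1r ?mul1mx ?scale0r ?mul0mx.
Qed.

Lemma augA_lump s r (Th : 'M[R]_r) (Ah : 'I_r -> 'M[R]_n) (Tb : 'M[R]_s)
    (f : 'I_s -> 'I_r) :
  (forall i l, \sum_(j | f j == l) Tb i j = Th (f i) l) ->
  augA Th Ah *m lump_mx f = lump_mx f *m augA Tb (fun i => Ah (f i)).
Proof.
move=> Tb_lump; apply/(@mxblockP _ _ _ (fun=> N) (fun=> N)) => l j.
rewrite block_mul_lump_mx block_lump_mx_mul /augA mxblockK.
under eq_bigr do rewrite mxblockK.
by rewrite -scaler_suml Tb_lump.
Qed.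

End BlockMatrices.

Section LumpedAugmentedMatrices.
Variables (R : realType) (n s r : nat) (Th : 'M[R]_r) (Ah : 'I_r -> 'M[R]_n)
  (f : 'I_s -> 'I_r) (Tb : 'M[R]_s).
Hypothesis Tb_ge0 : forall i j, 0 <= Tb i j.
Hypothesis Tb_lump : forall i l, \sum_(j | f j == l) Tb i j = Th (f i) l.
Hypothesis f_surj : forall l, exists i, f i = l.
Local Notation N := (n * n)%N.
Local Notation blk X i j := (@submxblock R _ _ (fun=> N) (fun=> N) X i j).
Local Notation Mh := (augA Th Ah).
Local Notation Mb := (augA Tb (fun i => Ah (f i))).

Lemma lumped_pow_block_sum k l j :
  \sum_(i | f i == l) blk (Mb ^+ k) i j = blk (Mh ^+ k) l (f j).
Proof.
by rewrite -block_lump_mx_mul -(intertwine_pow (augA_lump Ah Tb_lump)) block_mul_lump_mx.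
Qed.

Lemma lumped_pow_entry_le k p q :
  `|(Mb ^+ k) p q| <= N%:R * \sum_u \sum_v `|(Mh ^+ k) u v|.
Proof.
(* The entry is bounded by the form of its block, hence by the form of the sum
   of the blocks of its class, which is a block of [Mh ^+ k]. *)
have Mb_cone := augA_pow_block_cone (fun i => Ah (f i)) Tb_ge0 k.
rewrite mxblock_entry; set i := tagnat.sig1 p; set j := tagnat.sig1 q.
apply: le_trans (tens_sq_cone_entry_le _ _ (Mb_cone i j)) _.
apply: le_trans (_ : vec1_form (\sum_(i' | f i' == f i) blk (Mb ^+ k) i' j) <= _).
  rewrite vec1_form_sum.
  apply: (ler_sum_term (F := fun i' => vec1_form (blk (Mb ^+ k) i' j))) => // i' _.
  exact: tens_sq_cone_form_ge0.
set total := \sum_u \sum_v _.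
have -> : N%:R * total = \sum_(a < n) \sum_(b < n) total.
  by rewrite !sumr_const !card_ord -mulrnA mulr_natl.
rewrite lumped_pow_block_sum; apply: ler_sum => a _; apply: ler_sum => b _.
rewrite /submxblock /mxsub mxE (le_trans (ler_norm _)) //.
exact: (@ler_sum2_term _ _ _ (fun u v => `|(Mh ^+ k) u v|)).
Qed.

Lemma eigenvalue_lump l : eigenvalue (cmx Mh) l -> eigenvalue (cmx Mb) l.
Proof.
move=> /eigenvalueP[v v_eig v_neq0]; apply/eigenvalueP; exists (v *m cmx (lump_mx R n f)).
  by rewrite -mulmxA /cmx -map_mxM -(augA_lump Ah Tb_lump) map_mxM mulmxA v_eig -scalemxAl.
have [g fgK] := choice f_surj.
have {}fgK : (fun l => f (g l)) = id by apply/funext.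
apply: contra v_neq0 => /eqP vS0; apply/eqP.
rewrite -[v]mulmx1 -(map_mx1 (@real_complex R)) -lump_mx_id -fgK -lump_mxM.
by rewrite map_mxM mulmxA vS0 mul0mx.
Qed.

Lemma eigenvalue_lump_le mu rho : 0 <= rho ->
  (forall l, eigenvalue (cmx Mh) l -> cmod l <= rho) ->
  eigenvalue (cmx Mb) mu -> cmod mu <= rho.
Proof.
move=> rho_ge0 Mh_le Mb_mu; apply/ler_addgt0Pr => eps eps_gt0.
have [K growMh] := mxpow_growth rho_ge0 eps_gt0 Mh_le.
apply: (@eigenvalue_le_of_mxpow_growth _ _ Mb (N%:R * \sum_u \sum_v K)) Mb_mu => [|k p q].
  exact: ltr_wpDl.
apply: le_trans (lumped_pow_entry_le k p q) _.
rewrite -mulrA ler_wpM2l // mulr_suml; apply: ler_sum => u _.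
by rewrite mulr_suml; apply: ler_sum => v _; exact: growMh.
Qed.

End LumpedAugmentedMatrices.

Section SpectralRadius.
Variable R : realType.
Local Open Scope classical_set_scope.

Lemma eigenvalue_cmod_ubound m (M : 'M[R]_m) :
  has_ubound [set cmod l | l in [set l | eigenvalue (cmx M) l]].
Proof.
have [zs charM] := closed_field_poly_normal (char_poly (cmx M)).
rewrite (monicP (char_poly_monic _)) scale1r in charM.
exists (\sum_(z <- zs) cmod z) => _ [l /= eig_l <-].
move: eig_l; rewrite eigenvalue_root_char charM root_prod_XsubC => l_zs.
by rewrite (big_rem l l_zs) /= lerDl sumr_ge0 // => z _; exact: cmod_ge0.
Qed.

Lemma eigenvalue_le_specrad m (M : 'M[R]_m) l :
  eigenvalue (cmx M) l -> cmod l <= specrad M.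
Proof. by move=> eig_l; apply: ub_le_sup; [exact: eigenvalue_cmod_ubound|exists l]. Qed.

Lemma specrad_le m (M : 'M[R]_m) rho : 0 <= rho ->
  (forall l, eigenvalue (cmx M) l -> cmod l <= rho) -> specrad M <= rho.
Proof.
move=> rho_ge0 eig_le; rewrite /specrad.
have [->|/set0P ne] := eqVneq [set cmod l | l in [set l | eigenvalue (cmx M) l]] set0.
  by rewrite sup0.
by apply: ge_sup ne _ => _ [l eig_l <-]; exact: eig_le.
Qed.

Lemma specrad_ge0 m (M : 'M[R]_m) : 0 <= specrad M.
Proof.
rewrite /specrad; have [->|/set0P[_ [l eig_l _]]] :=
  eqVneq [set cmod l | l in [set l | eigenvalue (cmx M) l]] set0; first by rewrite sup0.
exact: le_trans (cmod_ge0 l) (eigenvalue_le_specrad eig_l).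
Qed.

End SpectralRadius.

Lemma mxprod_comp (R : realType) m m' n (M : 'I_m -> 'M[R]_n) (g : 'I_m' -> 'I_m)
    (l : seq 'I_m') :
  mxprod (fun i => M (g i)) l = mxprod M (map g l).
Proof. by elim: l => //= i l; rewrite /mxprod /= => ->. Qed.

Lemma jsr_comp_surj (R : realType) s r n (M : 'I_r -> 'M[R]_n) (f : 'I_s -> 'I_r) :
  (forall l, exists i, f i = l) -> jsr M = jsr (fun i => M (f i)).
Proof.
move=> f_surj; have [g fgK] := choice f_surj.
rewrite /jsr; do 3 f_equal; apply/funext => k; congr (_ `^ _).
apply/le_anti/andP; split; apply/bigmax_leP; split=> [|sg _]; rewrite ?bigmax_ge_id //.
  apply/bigmax_geP; right; exists [ffun i => g (sg i)] => //.
  rewrite [X in _ <= `|X|]mxprod_comp -map_comp.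
  by rewrite [X in _ <= `|mxprod _ X|](@eq_map _ _ _ sg) // => i /=; rewrite ffunE fgK.
apply/bigmax_geP; right; exists [ffun i => f (sg i)] => //.
rewrite [X in `|X| <= _]mxprod_comp -map_comp.
rewrite [X in `|mxprod _ X| <= _](@eq_map _ _ _ [ffun i => f (sg i)]) //.
by move=> i /=; rewrite ffunE.
Qed.

Theorem lemma2 (R : realType) (n s r : nat)
  (A : 'I_s -> 'M[R]_n) (T : 'M[R]_s) (f : 'I_s -> 'I_r) (Tbar : 'M[R]_s) :
  stochastic_mx T ->
  (forall k : 'I_r, exists i : 'I_s, f i = k) ->
  stochastic_mx Tbar ->
  (forall (i : 'I_s) (l : 'I_r),
      \sum_(j < s | f j == l) Tbar i j = redT T f (f i) l) ->
  specrad (augA (redT T f) (redA A f)) =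
    specrad (augA Tbar (fun i => redA A f (f i))) /\
  jsr (redA A f) = jsr (fun i => redA A f (f i)).
Proof.
move=> _ f_surj [Tbar_ge0 _] Tbar_lump; split; last exact: jsr_comp_surj.
apply/le_anti/andP; split; apply: specrad_le; rewrite ?specrad_ge0 // => l eig_l.
  exact/eigenvalue_le_specrad/(eigenvalue_lump Tbar_lump f_surj).
apply: (eigenvalue_lump_le Tbar_ge0 Tbar_lump (specrad_ge0 _) _ eig_l).
exact: eigenvalue_le_specrad.
Qed.
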